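(* Assume the standing hypotheses described in the context. Take $t,\varepsilon,\theta\ge0$ and $x\in C$ such that \[\|x-x_0\|\le t<\bar t,\qquad \|F'(x_0)^{-1}F(x)\|\le f(t)+\varepsilon,\qquad t-(1+\theta)\frac{f(t)+\varepsilon}{f'(t)}<R.\] If $y\in\mathbb X$ and $\|F'(x_0)^{-1}[F(x)+F'(x)(y-x)]\|\le\theta\|F'(x_0)^{-1}F(x)\|$, then (1) $\|y-x\|\le-(1+\theta)\frac{f(t)+\varepsilon}{f'(t)}$; (2) $\|y-x_0\|\le t-(1+\theta)\frac{f(t)+\varepsilon}{f'(t)}<R$; (3) $\|F'(x_0)^{-1}F(y)\|\le f\Big(t-(1+\theta)\frac{f(t)+\varepsilon}{f'(t)}\Big)+\varepsilon+2\theta(f(t)+\varepsilon)$.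
   Context: Standing hypotheses: $\mathbb X,\mathbb Y$ are Banach spaces; $B(x,r)$ is the open ball. $R\in\mathbb R$, $C\subseteq\mathbb X$, $F:C\to\mathbb Y$ is continuous and continuously differentiable on $\mathrm{int}(C)$, $x_0\in\mathrm{int}(C)$ with $F'(x_0)$ non-singular, $f:[0,R)\to\mathbb R$ is continuously differentiable, $B(x_0,R)\subseteq C$, $\|F'(x_0)^{-1}[F'(y)-F'(x)]\|\le f'(\|y-x\|+\|x-x_0\|)-f'(\|x-x_0\|)$ for all $x,y\in B(x_0,R)$ with $\|x-x_0\|+\|y-x\|<R$, $\|F'(x_0)^{-1}F(x_0)\|\le f(0)$, and (h1) $f(0)>0$, $f'(0)=-1$; (h2) $f'$ is strictly increasing and convex; (h3) $f(t)<0$ for some $t\in(0,R)$. Notation: $\bar t:=\sup\{t\in[0,R):f'(t)<0\}$. *)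

From HB Require Import structures.
From mathcomp Require Import all_boot all_order all_algebra.
From mathcomp Require Import all_classical all_reals all_analysis.
Set Implicit Arguments. Unset Strict Implicit. Unset Printing Implicit Defensive.
Import Order.TTheory GRing.Theory Num.Theory.
Import numFieldNormedType.Exports.
Local Open Scope classical_set_scope.
Local Open Scope ring_scope.

Definition tbar (K : realType) (df : K -> K) (R : K) : K :=
  sup [set t | 0 <= t /\ t < R /\ df t < 0].

Definition has_deriv_on_0R (K : realType) (f df : K -> K) (R : K) : Prop :=
  forall t, 0 <= t -> t < R ->
    (fun h : K => h^-1 * (f (t + h) - f t))
      @ within [set h | 0 <= t + h /\ t + h < R] (0 : K)^' --> df t.

From HB Require Import structures.
From mathcomp Require Import all_boot all_order all_algebra.
From mathcomp Require Import all_classical all_reals all_analysis.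
From mathcomp Require Import ring lra.
Import Order.TTheory GRing.Theory Num.Theory.
Import numFieldNormedType.Exports.
Local Open Scope classical_set_scope.
Local Open Scope ring_scope.
Set Implicit Arguments. Unset Strict Implicit. Unset Printing Implicit Defensive.

(* Write [S] for the right-hand side of (1) and [L0inv] for F'(x0)^-1.  The
   majorant condition at [x0] gives the Banach-type lower bound
   `|L0inv (F'(x) v)| >= - f'(t) `|v|, which turns the inexactness condition
   on the step [y - x] into (1), and (2) follows by the triangle inequality.
   For (3), the linearization error of [F] along the segment [x, y] is
   compared with that of the majorant [f] along [t, t + S]: by the majorant
   condition and the convexity of f', the derivative of the first is bounded
   by that of the second, so a mean value inequality (proved by continuous
   induction, as [F] is only differentiable) gives
   `|L0inv (F y - F x - F'(x) (y - x))| <= f (t + S) - f t - f'(t) S.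
   Differentiating [L0inv \o F] requires [L0inv] to be bounded, which is the
   bounded inverse theorem. *)

Section ContinuousInduction.
Variables (K : realType) (phi : K -> K).
Hypothesis phi0 : phi 0 <= 0.
Hypothesis phi_right : forall tau, 0 <= tau -> tau < 1 -> forall e, 0 < e ->
  exists2 d, 0 < d & forall h, 0 < h -> h < d -> tau + h <= 1 ->
    phi (tau + h) <= phi tau + e * h.
Hypothesis phi_left : forall tau, 0 < tau -> tau <= 1 -> forall e, 0 < e ->
  exists2 d, 0 < d & forall h, 0 < h -> h < d -> h <= tau ->
    phi tau <= phi (tau - h) + e.

(* Continuous induction: for every slope [eta > 0], the set of [tau] below
   which [phi s <= eta * s] is closed on the left and cannot stop short of 1. *)
Section FixedSlope.
Variable eta : K.
Hypothesis eta_gt0 : 0 < eta.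

Let below (tau : K) := forall s, 0 <= s -> s <= tau -> phi s <= eta * s.
Let S := [set tau : K | 0 <= tau /\ tau <= 1 /\ below tau].

Let S0 : S 0.
Proof.
split=> //; split=> // s s0 s_le0.
have -> : s = 0 by apply/le_anti; rewrite s0 s_le0.
by rewrite mulr0.
Qed.

Let S_has_sup : has_sup S.
Proof. by split; [exists 0 | exists 1 => tau [_ []]]. Qed.

Let sup_ge0 : 0 <= sup S. Proof. exact: sup_upper_bound. Qed.

Let sup_le1 : sup S <= 1.
Proof. by apply: ge_sup; [exists 0 | move=> tau [_ []]]. Qed.

Let below_lt_sup s : 0 <= s -> s < sup S -> phi s <= eta * s.
Proof.
move=> s0 s_lt; have sup_s_gt0 : 0 < sup S - s by rewrite subr_gt0.
have [tau [_ [_ Btau]]] := sup_adherent sup_s_gt0 S_has_sup.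
by rewrite opprB addrC subrK => /ltW; exact: Btau.
Qed.

Let below_sup : below (sup S).
Proof.
move=> s s0; rewrite le_eqVlt => /orP[/eqP ->|]; last exact: below_lt_sup.
have [->|sup_gt0] := eqVneq (sup S) 0; first by rewrite mulr0.
have {}sup_gt0 : 0 < sup S by rewrite lt_neqAle eq_sym sup_gt0.
apply/ler_addgt0Pr => e e0; have [d d0 Hd] := phi_left sup_gt0 sup_le1 e0.
pose h := Num.min (d / 2) (sup S).
have h_gt0 : 0 < h by rewrite lt_min divr_gt0.
have h_lt : h < d by rewrite gt_min; apply/orP; left; lra.
have h_le : h <= sup S by rewrite ge_min lexx orbT.
have := Hd h h_gt0 h_lt h_le.
have : phi (sup S - h) <= eta * (sup S - h) by apply: below_lt_sup; lra.
have : 0 <= eta * h by rewrite mulr_ge0 // ltW.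
rewrite mulrBr; lra.
Qed.

Let sup_eq1 : sup S = 1.
Proof.
have sup0 := sup_ge0.
apply/le_anti; rewrite sup_le1 /= leNgt; apply/negP => sup_lt1.
have [d d0 Hd] := phi_right sup0 sup_lt1 eta_gt0.
pose h := Num.min (d / 2) (1 - sup S).
have h_gt0 : 0 < h by rewrite lt_min divr_gt0 // subr_gt0.
have h_lt : h < d by rewrite gt_min; apply/orP; left; lra.
have h_le : h <= 1 - sup S by rewrite ge_min lexx orbT.
suff /(sup_upper_bound S_has_sup) : S (sup S + h) by lra.
split; first lra; split=> [|s s0 s_le]; first lra.
have [|s_gt] := leP s (sup S); first exact: below_sup.
have := Hd (s - sup S); rewrite (addrC (sup S) (s - sup S)) subrK.
have := below_sup sup0 (lexx _).
move=> Bsup /(_ ltac:(lra) ltac:(lra) ltac:(lra)); nra.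
Qed.

Lemma le_slope_at1 : phi 1 <= eta.
Proof. by have := @below_sup 1; rewrite sup_eq1 mulr1; apply. Qed.

End FixedSlope.

Lemma continuous_induction_le0 : phi 1 <= 0.
Proof. by apply/ler_addgt0Pr => eta eta0; rewrite add0r; exact: le_slope_at1. Qed.

End ContinuousInduction.

Definition has_derivative_on01 (K : realType) (V : normedModType K) (u u' : K -> V) :=
  forall tau, 0 <= tau <= 1 -> forall e : K, 0 < e -> exists2 d : K, 0 < d &
    forall h, `|h| < d -> 0 <= tau + h <= 1 ->
      `|u (tau + h) - u tau - h *: u' tau| <= e * `|h|.

Lemma has_derivative_on01_increment (K : realType) (V : normedModType K)
    (u u' : K -> V) tau e :
  has_derivative_on01 u u' -> 0 <= tau <= 1 -> 0 < e -> exists2 d : K, 0 < d &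
    forall h, `|h| < d -> 0 <= tau + h <= 1 ->
      `|u (tau + h) - u tau| <= (`|u' tau| + e) * `|h|.
Proof.
move=> du tau01 e0; have [d d0 Hd] := du tau tau01 e e0.
exists d => // h hd tauh; rewrite -[u _ - _](subrK (h *: u' tau)).
apply: (le_trans (ler_normD _ _)); rewrite normrZ mulrDl mulrC addrC lerD2l.
exact: Hd.
Qed.

Section MeanValueInequality.
Variables (K : realType) (V : normedModType K) (u u' : K -> V) (w w' : K -> K).
Hypotheses (du : has_derivative_on01 u u') (dw : has_derivative_on01 w w').
Hypothesis u'_le : forall tau, 0 <= tau <= 1 -> `|u' tau| <= w' tau.

Let phi tau := `|u tau - u 0| - (w tau - w 0).

Let phi_right tau : 0 <= tau -> tau < 1 -> forall e, 0 < e ->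
  exists2 d, 0 < d & forall h, 0 < h -> h < d -> tau + h <= 1 ->
    phi (tau + h) <= phi tau + e * h.
Proof.
move=> tau0 tau1 e e0; have tau01 : 0 <= tau <= 1 by rewrite tau0 ltW.
have e2 : 0 < e / 2 by rewrite divr_gt0.
have [d1 d1_gt0 Hu] := has_derivative_on01_increment du tau01 e2.
have [d2 d2_gt0 Hw] := dw tau01 e2.
exists (Num.min d1 d2) => [|h h0]; first by rewrite lt_min d1_gt0.
rewrite lt_min => /andP[hd1 hd2] tauh1.
have tauh : 0 <= tau + h <= 1 by rewrite tauh1 andbT addr_ge0 // ltW.
have hh : `|h| = h := gtr0_norm h0.
have := Hu h ltac:(by rewrite hh) tauh; have := Hw h ltac:(by rewrite hh) tauh.
rewrite hh /phi ler_norml => /andP[+ _].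
have := ler_wpM2r (ltW h0) (u'_le tau01).
have := ler_distD (u tau) (u (tau + h)) (u 0).
rewrite /GRing.scale /=; lra.
Qed.

Let phi_left tau : 0 < tau -> tau <= 1 -> forall e, 0 < e ->
  exists2 d, 0 < d & forall h, 0 < h -> h < d -> h <= tau ->
    phi tau <= phi (tau - h) + e.
Proof.
move=> tau0 tau1 e e0; have tau01 : 0 <= tau <= 1 by rewrite ltW.
have [d1 d1_gt0 Hu] := has_derivative_on01_increment du tau01 ltr01.
have [d2 d2_gt0 Hw] := has_derivative_on01_increment dw tau01 ltr01.
pose B := `|u' tau| + `|w' tau| + 2.
have B_gt0 : 0 < B by rewrite /B ltr_wpDl ?addr_ge0.
exists (Num.min (Num.min d1 d2) (e / B)) => [|h h0].
  by rewrite !lt_min d1_gt0 d2_gt0 divr_gt0.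
rewrite !lt_min ltr_pdivlMr // => /andP[/andP[hd1 hd2] heB] h_le.
have tauh : 0 <= tau + - h <= 1 by rewrite subr_ge0 h_le /= lerBlDr ler_wpDr // ltW.
have hh : `|- h| = h by rewrite normrN gtr0_norm.
have := Hu (- h) ltac:(by rewrite hh) tauh; have := Hw (- h) ltac:(by rewrite hh) tauh.
rewrite hh [`|w _ - _|]distrC [`|u _ - _|]distrC ler_norml => /andP[Hw' _] Hu'.
have := ler_distD (u (tau - h)) (u tau) (u 0).
rewrite /phi /B in heB *; lra.
Qed.

Lemma mean_value_inequality01 : `|u 1 - u 0| <= w 1 - w 0.
Proof.
rewrite -subr_le0; apply: (continuous_induction_le0 (phi := phi)) => //.
by rewrite /phi !subrr normr0 subr0.
Qed.

End MeanValueInequality.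

Section LinearInverse.
Variables (K : pzRingType) (X Y : lmodType K) (L : {linear X -> Y}) (M : Y -> X).
Hypotheses (LK : cancel L M) (MK : cancel M L).

Lemma linear_inverse_subproof : linear M.
Proof. by move=> k a b; rewrite -{1}(MK a) -{1}(MK b) -linearP LK. Qed.

Definition linear_inverse : {linear Y -> X} :=
  HB.pack M (GRing.isLinear.Build _ _ _ _ M linear_inverse_subproof).

End LinearInverse.

Lemma sublevel_somewhere_dense (K : realType) (U : completeNormedModType K)
    (N : U -> K) :
  exists n : nat, exists w0 : U, exists2 r : K, 0 < r &
    ball w0 r `<=` closure [set w | N w <= n%:R].
Proof.
apply: contrapT => nowhere_dense.
pose A (i : nat) := closure [set w : U | N w <= i%:R].
have dense_compl i : open (~` A i) /\ dense (~` A i).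
  split; first exact/closed_openC/closed_closure.
  move=> O [p Op] oO; apply: contrapT => OA; apply: nowhere_dense; exists i, p.
  have /nbhs_ballP [e e0 He] := open_nbhs_nbhs (conj oO Op).
  exists e => // z pz; apply: contrapT => Az; apply: OA; exists z.
  by split => //; exact: He.
have [||w [_ /(_ (Num.truncn (N w)).+1 I)]] := Baire dense_compl (O := setT).
- by exists 0.
- exact: openT.
apply; apply: subset_closure; rewrite /= ltW //; exact: truncnS_gt.
Qed.

(* Banach's lemma: an approximate right inverse with relative error 1/2 can be
   corrected into an exact one by summing the corrections of the residuals. *)
Lemma successive_approximation (K : realType) (X : completeNormedModType K)
    (Y : normedModType K) (L : {linear X -> Y}) (c : K) :
  continuous L -> 0 <= c ->
  (forall u, exists v, `|v| <= c * `|u| /\ `|u - L v| <= `|u| / 2) ->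
  forall w, exists2 s, L s = w & `|s| <= 2 * c * `|w|.
Proof.
move=> L_cont c0 approx w; have [G HG] := choice approx.
pose res k := iter k (fun u => u - L (G u)) w.
pose v k := G (res k).
have half_gt0 : (0 : K) < 2^-1 by rewrite invr_gt0.
have half_lt1 : `|2^-1 : K| < 1 by rewrite gtr0_norm // invf_lt1 ?ltr1n.
have res_le k : `|res k| <= geometric `|w| 2^-1 k.
  elim: k => [|k IH]; first by rewrite /= expr0 mulr1.
  have [_ /le_trans ->] // := HG (res k).
  rewrite /geometric /= in IH *.
  by rewrite exprS mulrCA [leLHS]mulrC ler_wpM2l // ltW.
have sum_le j : \sum_(0 <= k < j) `|v k| <= 2 * c * `|w|.
  have -> : 2 * c * `|w| = c * `|w| * (1 - 2^-1)^-1 by field.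
  apply: le_trans (geometric_le_lim _ _ half_gt0 half_lt1); last first.
    by rewrite mulr_ge0.
  apply: ler_sum => k _; have [/le_trans ->] // := HG (res k).
  by rewrite /= -mulrA ler_wpM2l.
have cvn : cvgn [normed series v].
  apply: nondecreasing_is_cvgn.
    by apply/nondecreasing_seqP => k; rewrite /= seriesSr lerDl.
  by exists (2 * c * `|w|) => _ [k _ <-]; exact: sum_le.
set s := limn (series v); exists s.
  have Lseries k : L (series v k) = w - res k.
    elim: k => [|k IH]; first by rewrite /series /= big_geq // linear0 subrr.
    by rewrite seriesSr linearD IH /res iterS opprB addrA addrAC.
  have to_Ls : (L \o series v) @ \oo --> L s.
    by apply: continuous_cvg; [exact: L_cont | exact: normed_cvg].
  have to_w : (L \o series v) @ \oo --> w.
    rewrite (_ : L \o _ = fun k => w - res k); last exact/funext.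
    rewrite -[X in _ --> X]subr0; apply: cvgB; first exact: cvg_cst.
    apply: norm_cvg0; apply: (@squeeze_cvgr _ _ _ _ (fun=> 0) (geometric `|w| 2^-1)).
    - by apply: nearW => k; rewrite normr_ge0 res_le.
    - exact: cvg_cst.
    - exact: cvg_geometric.
  exact: cvg_unique _ to_Ls to_w.
apply: (le_trans (lim_series_norm cvn)); apply: limr_le => //.
by apply: nearW => k; exact: sum_le.
Qed.

Section BoundedInverse.
Variables (K : realType) (X Y : completeNormedModType K).
Variables (L : {linear X -> Y}) (M : Y -> X).
Hypotheses (L_cont : continuous L) (LK : cancel L M) (MK : cancel M L).

(* By Baire, some sublevel set of [`|M _|] is dense in a ball; differences of
   its points are approximate [L]-preimages, of bounded norm, of a ball at 0. *)
Lemma approx_preimage_ball : exists2 N : K, 0 <= N & exists2 r : K, 0 < r &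
  forall u, `|u| < r -> forall e, 0 < e -> exists v, `|v| <= N /\ `|u - L v| < e.
Proof.
have [n [w0 [r r0 ball_dense]]] := sublevel_somewhere_dense (fun w => `|M w|).
have approx_in_ball w : ball w0 r w -> forall e, 0 < e ->
    exists a, `|M a| <= n%:R /\ `|w - a| < e.
  move=> /ball_dense Aw e e0; have [a [Ma ba]] := Aw _ (nbhsx_ballx w e e0).
  by exists a; split => //; move: ba; rewrite -ball_normE.
exists (n%:R + n%:R) => //; exists r => // u ur e e0.
have [|a [Ma ha]] := approx_in_ball (w0 + u) _ _ (divr_gt0 e0 (ltr0n _ 2)).
  by rewrite -ball_normE /ball_ /= opprD addrA subrr sub0r normrN.
have [|b [Mb hb]] := approx_in_ball w0 _ _ (divr_gt0 e0 (ltr0n _ 2)).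
  exact: ballxx.
exists (M a - M b); split; first exact: le_trans (ler_normB _ _) (lerD Ma Mb).
rewrite linearB !MK (_ : u - (a - b) = (w0 + u - a) - (w0 - b)); last first.
  by rewrite !opprB !addrA [RHS]addrC !addrA addNr add0r addrAC.
apply: le_lt_trans (ler_normB _ _) _; rewrite [e]splitr; exact: ltrD.
Qed.

Lemma approx_preimage : exists2 c : K, 0 < c &
  forall u, exists v, `|v| <= c * `|u| /\ `|u - L v| <= `|u| / 2.
Proof.
have [N N0 [r r0 near0]] := approx_preimage_ball.
exists (2 * (N + 1) / r) => [|u]; first by rewrite divr_gt0 // mulr_gt0 // ltr_wpDl.
have [->|u0] := eqVneq u 0.
  by exists 0; rewrite linear0 subr0 !normr0 mulr0 mul0r.
have nu : 0 < `|u| by rewrite normr_gt0.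
pose lam := r / (2 * `|u|).
have lam0 : 0 < lam by rewrite divr_gt0 // mulr_gt0.
have ilam : lam^-1 = 2 * `|u| / r by rewrite invf_div.
have [|v [Nv Lv]] := near0 (lam *: u) _ (r / 4) (divr_gt0 r0 (ltr0n _ 4)).
  rewrite normrZ gtr0_norm // /lam.
  have -> : r / (2 * `|u|) * `|u| = r / 2 by field; rewrite gt_eqF.
  lra.
exists (lam^-1 *: v); split.
  rewrite normrZ gtr0_norm ?invr_gt0 // ilam.
  have : 0 <= `|u| / r by rewrite divr_ge0 // ltW.
  nra.
rewrite (_ : u - L _ = lam^-1 *: (lam *: u - L v)); last first.
  by rewrite linearZ scalerBr scalerA mulVf ?gt_eqF // scale1r.
rewrite normrZ gtr0_norm ?invr_gt0 // ilam.
apply: le_trans (ler_wpM2l _ (ltW Lv)) _; first by rewrite divr_ge0 // ?ltW.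
rewrite [leLHS](_ : _ = `|u| / 2) //.
by field; rewrite gt_eqF.
Qed.

Lemma bounded_inverse : exists2 c : K, 0 < c & forall w, `|M w| <= c * `|w|.
Proof.
have [c c0 approx] := approx_preimage.
exists (2 * c) => [|w]; first by rewrite mulr_gt0.
have [s <- s_le] := successive_approximation L_cont (ltW c0) approx w.
by rewrite LK.
Qed.

End BoundedInverse.

Lemma differentiable_approx (K : realType) (X Y : normedModType K) (F : X -> Y) (z : X) :
  differentiable F z -> forall e : K, 0 < e -> exists2 d : K, 0 < d &
    forall k, `|k| < d -> `|F (z + k) - F z - 'd F z k| <= e * `|k|.
Proof.
move=> /diff_locally /eqaddoP littleo e e0.
have /nbhs_normP [d d0 Hd] := littleo e e0; exists d => // k kd.
have : ball_ Num.Def.normr 0 d k by rewrite /ball_ /= sub0r normrN.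
by move=> /Hd /=; rewrite /shift (addrC z k) opprD addrA.
Qed.

Lemma has_deriv_on_0R_approx (K : realType) (f df : K -> K) (R : K) :
  has_deriv_on_0R f df R -> forall p, 0 <= p -> p < R ->
  forall e, 0 < e -> exists2 d, 0 < d &
    forall k, `|k| < d -> 0 <= p + k -> p + k < R ->
      `|f (p + k) - f p - k * df p| <= e * `|k|.
Proof.
move=> df_f p p0 pR e e0.
have /cvgrPdist_lt /(_ e e0) /nbhs_normP [d d0 Hd] := df_f p p0 pR.
exists d => // k kd pk0 pkR.
have [->|k0] := eqVneq k 0; first by rewrite addr0 mul0r subrr subr0 normr0 mulr0.
have : ball_ Num.Def.normr 0 d k by rewrite /ball_ /= sub0r normrN.
move=> /Hd /(_ k0) /(_ (conj pk0 pkR)) close.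
rewrite (_ : _ - _ - _ = - (k * (df p - k^-1 * (f (p + k) - f p)))); last first.
  by rewrite mulrBr mulrA mulfV // mul1r opprB addrC.
by rewrite normrN normrM mulrC ler_wpM2r // ltW.
Qed.

Lemma has_derivative_on01_segment (K : realType) (X Y W : normedModType K)
    (F : X -> Y) (M : {linear Y -> W}) (cM : K) (x d : X) (P : Y) :
  0 < cM -> (forall w, `|M w| <= cM * `|w|) ->
  (forall tau, 0 <= tau <= 1 -> differentiable F (x + tau *: d)) ->
  has_derivative_on01 (fun tau => M (F (x + tau *: d) - tau *: P))
                      (fun tau => M ('d F (x + tau *: d) d - P)).
Proof.
move=> cM0 M_le dF tau tau01 e e0.
set z := x + tau *: d.
have s1 : 0 < `|d| + 1 by rewrite ltr_wpDl.
have e1 : 0 < e / (cM * (`|d| + 1)) by rewrite divr_gt0 // mulr_gt0.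
have [d1 d1_gt0 Hd1] := differentiable_approx (dF tau tau01) e1.
exists (d1 / (`|d| + 1)) => [|h]; first by rewrite divr_gt0.
rewrite ltr_pdivlMr // => hd1 _.
have hs : `|h *: d| < d1.
  by rewrite normrZ; apply: le_lt_trans hd1; rewrite ler_wpM2l // lerDl.
rewrite -!linearB -linearZ -linearB.
rewrite (_ : _ - _ - _ = F (z + h *: d) - F z - 'd F z (h *: d)); last first.
  rewrite [in RHS]linearZ /= scalerBr !scalerDl /z -[x + _ + h *: d]addrA.
  by rewrite opprD !opprB !addrA (addrAC (_ - tau *: P)) subrK (addrAC (_ - h *: P)) subrK.
apply: le_trans (M_le _) _; apply: le_trans (ler_wpM2l (ltW cM0) (Hd1 _ hs)) _.
rewrite normrZ (_ : cM * (_ / _ * _) = e * `|h| * (`|d| / (`|d| + 1))).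
  2: by field; rewrite !gt_eqF.
apply: ler_piMr; first by rewrite mulr_ge0 // ltW.
by rewrite ler_pdivrMr // mul1r lerDl.
Qed.

Lemma has_derivative_on01_majorant (K : realType) (f df : K -> K) (R t S : K) :
  has_deriv_on_0R f df R -> 0 <= t -> 0 <= S -> t + S < R ->
  has_derivative_on01 (fun tau => f (t + tau * S) - tau * (df t * S))
                      (fun tau => (df (t + tau * S) - df t) * S).
Proof.
move=> df_f t0 S0 tSR tau /andP[tau0 tau1] e e0.
have tauS : tau * S <= S by rewrite ler_piMl.
have S1 : 0 < S + 1 by rewrite ltr_wpDl.
have p0 : 0 <= t + tau * S by rewrite addr_ge0 ?mulr_ge0.
have pR : t + tau * S < R by lra.
have [d1 d1_gt0 Hd1] := has_deriv_on_0R_approx df_f p0 pR (divr_gt0 e0 S1).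
exists (d1 / (S + 1)) => [|h]; first by rewrite divr_gt0.
rewrite ltr_pdivlMr // => hd1 /andP[tauh0 tauh1].
have hS : `|h * S| < d1.
  by rewrite normrM (ger0_norm S0); apply: le_lt_trans hd1; rewrite ler_wpM2l ?lerDl.
have tauhS : (tau + h) * S <= S by rewrite ler_piMl.
have p'0 : 0 <= t + tau * S + h * S by rewrite -addrA -mulrDl addr_ge0 ?mulr_ge0.
have p'R : t + tau * S + h * S < R by rewrite -addrA -mulrDl; lra.
rewrite [(tau + h) * S]mulrDl addrA.
rewrite (_ : _ - _ - _ = f (t + tau * S + h * S) - f (t + tau * S)
                         - h * S * df (t + tau * S)); last first.
  by rewrite /GRing.scale /=; ring.
apply: le_trans (Hd1 _ hS p'0 p'R) _.
rewrite normrM (ger0_norm S0) (_ : _ / _ * _ = e * `|h| * (S / (S + 1))).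
  2: by field; rewrite gt_eqF.
apply: ler_piMr; first by rewrite mulr_ge0 // ltW.
by rewrite ler_pdivrMr // mul1r lerDl.
Qed.

Lemma convex_increment_le (K : realType) (g : K -> K) (R : K) :
  (forall s u l, 0 <= s -> s < R -> 0 <= u -> u < R -> 0 <= l -> l <= 1 ->
     g (l * s + (1 - l) * u) <= l * g s + (1 - l) * g u) ->
  forall a b h, 0 <= a -> a <= b -> 0 <= h -> b + h < R ->
    g (a + h) - g a <= g (b + h) - g b.
Proof.
move=> g_cvx a b h a0 ab h0 bhR.
have [D0|D_neq0] := eqVneq (b + h - a) 0.
  by have [-> ->] : b = a /\ h = 0 by lra; rewrite addr0.
have D_gt0 : 0 < b + h - a by rewrite lt_neqAle eq_sym D_neq0 /=; lra.
(* [a + h] and [b] are convex combinations of [a] and [b + h] with swapped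
   weights. *)
pose l := (b - a) / (b + h - a).
have l0 : 0 <= l by rewrite divr_ge0 //; lra.
have l1 : l <= 1 by rewrite ler_pdivrMr //; lra.
have := g_cvx a (b + h) l a0 ltac:(lra) ltac:(lra) bhR l0 l1.
have := g_cvx a (b + h) (1 - l) a0 ltac:(lra) ltac:(lra) bhR ltac:(lra) ltac:(lra).
rewrite (_ : l * a + _ = a + h); last by rewrite /l; field.
rewrite (_ : (1 - l) * a + _ = b); last by rewrite /l; field.
lra.
Qed.

Lemma lt_tbar (K : realType) (df : K -> K) (R t : K) :
  0 < R -> df 0 < 0 -> (forall s u, 0 <= s -> s < u -> u < R -> df s < df u) ->
  0 <= t -> t < tbar df R -> t < R /\ df t < 0.
Proof.
move=> R0 df0 df_incr t0 t_lt.
have has_sup_neg : has_sup [set u | 0 <= u /\ u < R /\ df u < 0].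
  by split; [exists 0 | exists R => u [_ [/ltW ? _]]].
have [u [_ uR dfu] tu] : exists2 u, [/\ 0 <= u, u < R & df u < 0] & t < u.
  have gap : 0 < tbar df R - t by rewrite subr_gt0.
  have [u [? [? ?]] ut] := sup_adherent gap has_sup_neg.
  by exists u => //; move: ut; rewrite /tbar; lra.
by split; [exact: lt_trans uR | exact: lt_trans (df_incr _ _ t0 tu uR) dfu].
Qed.

Lemma ler_dist_segment (K : numFieldType) (V : normedModType K) (x0 x d : V) tau :
  0 <= tau -> `|x + tau *: d - x0| <= `|x - x0| + tau * `|d|.
Proof.
by move=> tau0; rewrite addrAC; apply: le_trans (ler_normD _ _) _; rewrite normrZ ger0_norm.
Qed.

Section NewtonStep.
Variables (K : realType) (X Y : normedModType K) (F : X -> Y) (x0 : X).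
Variables (L0inv : {linear Y -> X}) (f df : K -> K) (R cM : K).
Hypotheses (L0invK : forall v, L0inv ('d F x0 v) = v)
  (cM_gt0 : 0 < cM) (L0inv_le : forall w, `|L0inv w| <= cM * `|w|)
  (F_diff : forall p, ball x0 R p -> differentiable F p)
  (f_deriv : has_deriv_on_0R f df R).
Hypothesis majorant : forall x y : X, ball x0 R x -> ball x0 R y ->
  `|x - x0| + `|y - x| < R ->
  forall v : X, `|L0inv ('d F y v - 'd F x v)|
    <= (df (`|y - x| + `|x - x0|) - df `|x - x0|) * `|v|.
Hypotheses (df0 : df 0 = -1)
  (df_incr : forall s u, 0 <= s -> s < u -> u < R -> df s < df u)
  (df_cvx : forall s u l, 0 <= s -> s < R -> 0 <= u -> u < R -> 0 <= l -> l <= 1 ->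
     df (l * s + (1 - l) * u) <= l * df s + (1 - l) * df u).

Lemma df_le p q : 0 <= p -> p <= q -> q < R -> df p <= df q.
Proof.
move=> p0; rewrite le_eqVlt => /orP[/eqP -> _ //|pq qR].
exact/ltW/df_incr.
Qed.

Lemma df_increment_le a b h k : 0 <= a -> a <= b -> 0 <= h -> h <= k -> b + k < R ->
  df (a + h) - df a <= df (b + k) - df b.
Proof.
move=> a0 ab h0 hk bkR.
apply: le_trans (convex_increment_le df_cvx a0 ab h0 _) _; first lra.
by rewrite lerD2r df_le ?lerD2l //; lra.
Qed.

Lemma norm_lt_ball_x0 p : `|p - x0| < R -> ball x0 R p.
Proof. by rewrite -ball_normE /ball_ /= distrC. Qed.

Lemma L0inv_dF_ge x t v : `|x - x0| <= t -> t < R ->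
  - df t * `|v| <= `|L0inv ('d F x v)|.
Proof.
move=> xt tR; have a0 := normr_ge0 (x - x0).
have x0x : `|x0 - x0| + `|x - x0| < R by rewrite subrr normr0 add0r; lra.
have x0_ball : ball x0 R x0 by apply: norm_lt_ball_x0; rewrite subrr normr0; lra.
have := majorant x0_ball (norm_lt_ball_x0 (p := x) ltac:(lra)) x0x v.
rewrite subrr normr0 addr0 df0 opprK => dF_near.
have v_eq : v = L0inv ('d F x v) - L0inv ('d F x v - 'd F x0 v).
  by rewrite linearB L0invK opprB addrC subrK.
have : `|v| <= `|L0inv ('d F x v)| + (df `|x - x0| + 1) * `|v|.
  by rewrite {1}v_eq; apply: le_trans (ler_normB _ _) _; rewrite lerD2l.
have := ler_wpM2r (normr_ge0 v) (df_le a0 xt tR); lra.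
Qed.

Lemma L0inv_dF_segment_le x d t S tau :
  `|x - x0| <= t -> `|d| <= S -> t + S < R -> 0 <= tau <= 1 ->
  `|L0inv ('d F (x + tau *: d) d - 'd F x d)| <= (df (t + tau * S) - df t) * S.
Proof.
move=> xt dS tSR /andP[tau0 tau1].
have a0 := normr_ge0 (x - x0); have d0 := normr_ge0 d.
have zx : `|x + tau *: d - x| = tau * `|d| by rewrite addrC addKr normrZ ger0_norm.
have tau_d : tau * `|d| <= tau * S by rewrite ler_wpM2l.
have tauS : tau * S <= S by rewrite ler_piMl //; lra.
have xz : `|x - x0| + `|x + tau *: d - x| < R by rewrite zx; lra.
have z_ball : ball x0 R (x + tau *: d).
  by apply/norm_lt_ball_x0/(le_lt_trans (ler_dist_segment _ _ _ tau0)); lra.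
have ttauSR : t + tau * S < R by lra.
have tauS0 : 0 <= tau * S := mulr_ge0 tau0 (le_trans d0 dS).
have := majorant (norm_lt_ball_x0 (p := x) ltac:(lra)) z_ball xz d.
rewrite zx [_ + `|x - x0|]addrC => /le_trans; apply.
apply: le_trans (ler_wpM2r d0 (df_increment_le a0 xt (mulr_ge0 tau0 d0) tau_d ttauSR)) _.
by apply: ler_wpM2l dS; rewrite subr_ge0 df_le //; lra.
Qed.

Lemma newton_remainder_le x d t S :
  `|x - x0| <= t -> `|d| <= S -> 0 <= t -> t + S < R ->
  `|L0inv (F (x + d) - F x - 'd F x d)| <= f (t + S) - f t - df t * S.
Proof.
move=> xt dS t0 tSR; have S0 : 0 <= S := le_trans (normr_ge0 _) dS.
have F_diff_segment tau : 0 <= tau <= 1 -> differentiable F (x + tau *: d).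
  move=> /andP[tau0 tau1]; apply/F_diff/norm_lt_ball_x0.
  apply: le_lt_trans (ler_dist_segment _ _ _ tau0) _.
  have := ler_wpM2l tau0 dS; have : tau * S <= S by rewrite ler_piMl.
  lra.
have := mean_value_inequality01
  (has_derivative_on01_segment ('d F x d) cM_gt0 L0inv_le F_diff_segment)
  (has_derivative_on01_majorant f_deriv t0 S0 tSR)
  (fun tau tau01 => L0inv_dF_segment_le xt dS tSR tau01).
rewrite !scale1r !scale0r addr0 subr0 !mul1r !mul0r !addr0 subr0 -linearB.
by rewrite (addrAC (F _)) (addrAC (f _)).
Qed.

End NewtonStep.
Theorem lemma4p1 (K : realType) (X Y : completeNormedModType K)
  (R : K) (C : set X) (F : X -> Y) (x0 : X) (L0inv : Y -> X)
  (f df : K -> K)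
  (* F continuous on C *)
  (HFcont : {within C, continuous F})
  (* F continuously differentiable on int(C) (operator-norm continuity of F') *)
  (HFdiff : forall x, interior C x -> differentiable F x)
  (HFC1 : forall x, interior C x -> forall e : K, 0 < e ->
      exists2 d : K, 0 < d & forall z, interior C z -> `|z - x| < d ->
        forall v : X, `|'d F z v - 'd F x v| <= e * `|v|)
  (Hx0 : interior C x0)
  (* F'(x0) non-singular, with inverse L0inv *)
  (HL0l : forall v : X, L0inv ('d F x0 v) = v)
  (HL0r : forall w : Y, 'd F x0 (L0inv w) = w)
  (* f continuously differentiable on [0,R) with derivative df *)
  (Hfder : has_deriv_on_0R f df R)
  (Hdfcont : {within [set t | 0 <= t /\ t < R], continuous df})
  (Hball : ball x0 R `<=` C)
  (* majorant condition *)
  (Hmaj : forall x y : X, ball x0 R x -> ball x0 R y ->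
      `|x - x0| + `|y - x| < R ->
      forall v : X, `|L0inv ('d F y v - 'd F x v)|
        <= (df (`|y - x| + `|x - x0|) - df `|x - x0|) * `|v|)
  (HF0 : `|L0inv (F x0)| <= f 0)
  (* h1 *)
  (h1a : 0 < f 0) (h1b : df 0 = -1)
  (* h2: f' strictly increasing and convex on [0,R) *)
  (h2inc : forall s u, 0 <= s -> s < u -> u < R -> df s < df u)
  (h2cvx : forall s u l, 0 <= s -> s < R -> 0 <= u -> u < R -> 0 <= l -> l <= 1 ->
      df (l * s + (1 - l) * u) <= l * df s + (1 - l) * df u)
  (* h3 *)
  (h3 : exists t, 0 < t /\ t < R /\ f t < 0)
  (t eps theta : K) (x : X)
  (Ht0 : 0 <= t) (Heps : 0 <= eps) (Htheta : 0 <= theta) (HxC : C x)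
  (Hxt : `|x - x0| <= t) (Httbar : t < tbar df R)
  (HFx : `|L0inv (F x)| <= f t + eps)
  (HtR : t - (1 + theta) * ((f t + eps) / df t) < R)
  (y : X)
  (Hy : `|L0inv (F x + 'd F x (y - x))| <= theta * `|L0inv (F x)|) :
  [/\ `|y - x| <= - ((1 + theta) * ((f t + eps) / df t)),
      `|y - x0| <= t - (1 + theta) * ((f t + eps) / df t)
        /\ t - (1 + theta) * ((f t + eps) / df t) < R
    & `|L0inv (F y)| <= f (t - (1 + theta) * ((f t + eps) / df t)) + eps
                         + 2 * theta * (f t + eps)].
Proof.
have R_gt0 : 0 < R by case: h3 => t3 [t3_gt0 [t3R _]]; exact: lt_trans t3R.
have [tR dft] : t < R /\ df t < 0.
  by apply: lt_tbar => //; rewrite h1b ltrN10.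
have [cM cM_gt0 L0inv_le] := bounded_inverse (diff_continuous (HFdiff _ Hx0)) HL0l HL0r.
pose L0 := linear_inverse HL0l HL0r.
have L0invB : {morph L0inv : a b / a - b} := linearB L0.
have L0invD : {morph L0inv : a b / a + b} := linearD L0.
have F_diff p : ball x0 R p -> differentiable F p.
  move=> p_ball; apply/HFdiff/(filterS Hball).
  exact: open_nbhs_nbhs (conj (ball_open x0 R) p_ball).
set S := - ((1 + theta) * ((f t + eps) / df t)).
have dfS : - df t * S = (1 + theta) * (f t + eps) by rewrite /S; field; rewrite lt_eqF.
have step_image : `|L0inv ('d F x (y - x))| <= (1 + theta) * (f t + eps).
  rewrite (_ : 'd F x _ = F x + 'd F x (y - x) - F x); last by rewrite addrAC subrr add0r.
  rewrite L0invB; apply: le_trans (ler_normB _ _) _.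
  have := normr_ge0 (L0inv (F x)); nra.
have step_le : `|y - x| <= S.
  have := L0inv_dF_ge (L0inv := L0) HL0l Hmaj h1b h2inc (y - x) Hxt tR.
  by move=> /le_trans /(_ step_image); rewrite -dfS ler_pM2l // oppr_gt0.
split => //.
  split => //; rewrite -(subrK x y) -addrA.
  by apply: le_trans (ler_normD _ _) _; rewrite [t + S]addrC; exact: lerD.
have := newton_remainder_le cM_gt0 (L0inv := L0) L0inv_le F_diff Hfder Hmaj h2inc h2cvx
  Hxt step_le Ht0 HtR.
rewrite [x + _]addrC subrK => remainder_le.
rewrite -(subrK (F x + 'd F x (y - x)) (F y)) L0invD.
apply: le_trans (ler_normD _ _) _; rewrite addrC opprD addrA.
have := normr_ge0 (L0inv (F x)); nra.
Qed.
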